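(* Let $T\ge 1$ be an integer and $M>0$. Assume: (A1) $f:\{1,\dots,T\}\times\mathbb{R}\times[-M,M]\to\mathbb{R}$ is such that $f(k,\cdot,\cdot)$ is continuous on $\mathbb{R}\times[-M,M]$ for each $k\in\{1,\dots,T\}$; $p:\{1,\dots,T+1\}\to\mathbb{R}$ and $g:\{1,\dots,T\}\to\mathbb{R}$; (A2) there exists $\alpha>0$ such that $y f(k,y,u)\le 0$ for all $|y|\ge\alpha$, all $|u|\le M$ and all $k=1,\dots,T$; (A3) $m=\min_{k\in\{1,\dots,T+1\}}p(k)>0$. Then for every fixed $u\in L_M$ the set $V_u$ is nonempty, i.e. there exists at least one solution $x\in V_u$ of the problem $$\Delta\big(p(k)\Delta x(k-1)\big)+f(k,x(k),u(k))=g(k),\quad k=1,\dots,T,\qquad x(0)=x(T+1)=0.$$ Moreover, let $\{u_n\}_{n\ge1}\subset L_M$ be a sequence converging to $\overline{u}\in L_M$ (in the maximum norm). Then for any sequence $\{x_n\}_{n\ge1}$ with $x_n\in V_{u_n}$ for each $n$, there exist a subsequence $\{x_{n_i}\}_{i\ge1}$ and $\overline{x}\in E$ such that $x_{n_i}\to\overline{x}$ as $i\to\infty$ and $J_{\overline{u}}(\overline{x})=\inf_{y\in E}J_{\overline{u}}(y)$. Furthermore $\overline{x}\in V_{\overline{u}}$, i.e. $\overline{x}$ satisfies $$\Delta\big(p(k)\Delta \overline{x}(k-1)\big)+f(k,\overline{x}(k),\overline{u}(k))=g(k),\quad k=1,\dots,T,\qquad \overline{x}(0)=\overline{x}(T+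1)=0.$$
   Context: For integers $A\le B$, $[A,B]$ denotes the discrete interval $\{A,A+1,\dots,B\}$. $\Delta$ is the forward difference: $\Delta x(k)=x(k+1)-x(k)$. $L_M=\{u:\{1,\dots,T\}\to\mathbb{R} : \max_{k}|u(k)|\le M\}$, with the maximum norm. $E$ is the space of functions $y:\{0,\dots,T+1\}\to\mathbb{R}$ with $y(0)=y(T+1)=0$, normed by $\|y\|=\sqrt{\sum_{k=1}^{T}(\Delta y(k))^2}$ (equivalent to the Euclidean norm; convergence in $E$ refers to this norm). For $k\in\{1,\dots,T\}$, $y\in\mathbb{R}$, $|u|\le M$, let $F(k,y,u)=\int_0^{y}f(k,t,u)\,dt$. For $u\in L_M$ the functional $J_u:E\to\mathbb{R}$ is $$J_u(y)=\sum_{k=1}^{T+1}\frac{p(k)}{2}\big(\Delta y(k-1)\big)^2-\sum_{k=1}^{T}F(k,y(k),u(k))+\sum_{k=1}^{T}g(k)y(k),$$ and $V_u=\{x\in E: J_u(x)=\inf_{v\in E}J_u(v)\ \text{and}\ \tfrac{d}{dx}J_u(x)=0\}$ (the set of minimizers of $J_u$ at which its derivative vanishes). *)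

From Stdlib Require Export Reals Lra List.
From Coquelicot Require Export Coquelicot.
Open Scope R_scope.

Definition Delta (x : nat -> R) (k : nat) : R := x (S k) - x k.

(* functions y : {0..T+1} -> R, represented by nat -> R; the space E *)
Definition inE (T : nat) (y : nat -> R) : Prop := y 0%nat = 0 /\ y (S T) = 0.

Definition normE (T : nat) (y : nat -> R) : R :=
  sqrt (sum_n_m (fun k => (Delta y k) ^ 2) 1 T).

Definition inLM (T : nat) (M : R) (u : nat -> R) : Prop :=
  forall k, (1 <= k <= T)%nat -> Rabs (u k) <= M.

Definition maxnorm (T : nat) (u : nat -> R) : R :=
  fold_right Rmax 0 (map (fun k => Rabs (u k)) (seq 1 T)).

Definition minp (T : nat) (p : nat -> R) : R :=
  fold_right Rmin (p 1%nat) (map p (seq 1 (S T))).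

Definition Fint (f : nat -> R -> R -> R) (k : nat) (y u : R) : R :=
  RInt (fun t => f k t u) 0 y.

Definition J (T : nat) (p : nat -> R) (f : nat -> R -> R -> R) (g : nat -> R)
    (u : nat -> R) (y : nat -> R) : R :=
  sum_n_m (fun k => p k / 2 * (Delta y (k - 1)) ^ 2) 1 (S T)
  - sum_n_m (fun k => Fint f k (y k) (u k)) 1 T
  + sum_n_m (fun k => g k * y k) 1 T.

Definition V (T : nat) (p : nat -> R) (f : nat -> R -> R -> R) (g : nat -> R)
    (u : nat -> R) (x : nat -> R) : Prop :=
  inE T x
  /\ (forall v, inE T v -> J T p f g u x <= J T p f g u v)
  /\ (forall h, inE T h ->
        is_derive (fun t : R => J T p f g u (fun k => x k + t * h k)) 0 0).

Definition cont_f (T : nat) (M : R) (f : nat -> R -> R -> R) : Prop :=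
  forall k, (1 <= k <= T)%nat -> forall y u, -M <= u <= M ->
    filterlim (fun z : R * R => f k (fst z) (snd z))
      (within (fun z : R * R => -M <= snd z <= M) (locally (y, u)))
      (locally (f k y u)).

From Stdlib Require Import ClassicalEpsilon FunctionalExtensionality Lia Arith.
Open Scope R_scope.

(* Identify E with R^T.  The sign condition (A2) bounds each F(k, ., u) from above,
   uniformly in |u| <= M, and together with min p > 0 this makes J_u coercive:
   J_u(y) >= (min p / 4) sum (Delta y)^2 - K for every u in L_M.  Hence the sublevel
   sets of the J_u are bounded uniformly in u.  If u_n -> ubar and x_n are
   eps_n-minimizers of J_{u_n} with eps_n -> 0, Bolzano-Weierstrass gives a convergent
   subsequence, and the joint continuity of (u, y) |-> J_u(y) makes its limit a minimizer
   of J_ubar.  With u_n = u this yields a minimizer of J_u, with exact minimizers the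
   stability statement; at a minimizer the derivative of J in the direction of each
   unit vector vanishes, which is the difference equation. *)

Definition strictly_increasing (phi : nat -> nat) : Prop :=
  forall i, (phi i < phi (S i))%nat.

Lemma strictly_increasing_ge phi : strictly_increasing phi -> forall i, (i <= phi i)%nat.
Proof. intros Hphi i; induction i; [lia | specialize (Hphi i); lia]. Qed.

Lemma strictly_increasing_comp phi psi :
  strictly_increasing phi -> strictly_increasing psi ->
  strictly_increasing (fun i => phi (psi i)).
Proof.
  intros Hphi Hpsi i.
  assert (Hmono : forall a b, (a < b)%nat -> (phi a < phi b)%nat).
  { intros a b Hab; induction Hab; [apply Hphi | specialize (Hphi m); lia]. }
  apply Hmono, Hpsi.
Qed.

Lemma Un_cv_const c : Un_cv (fun _ => c) c.
Proof.
  intros e He; exists 0%nat; intros n _.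
  unfold R_dist; rewrite Rminus_eq_0, Rabs_R0; exact He.
Qed.

Lemma Un_cv_ext a b l : (forall n, a n = b n) -> Un_cv a l -> Un_cv b l.
Proof.
  intros Hab Ha e He; destruct (Ha e He) as [N HN]; exists N.
  intros n Hn; rewrite <- Hab; auto.
Qed.

Lemma Un_cv_reindex a l idx :
  Un_cv a l -> (forall i, (i <= idx i)%nat) -> Un_cv (fun i => a (idx i)) l.
Proof.
  intros Ha Hidx e He; destruct (Ha e He) as [N HN]; exists N.
  intros n Hn; apply HN; specialize (Hidx n); lia.
Qed.

Lemma Un_cv_subseq a l phi :
  Un_cv a l -> strictly_increasing phi -> Un_cv (fun i => a (phi i)) l.
Proof. intros Ha Hphi; apply Un_cv_reindex, strictly_increasing_ge; assumption. Qed.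

Lemma bounded_cv_subseq (a : nat -> R) B :
  (forall n, Rabs (a n) <= B) ->
  exists phi, strictly_increasing phi /\ exists l, Un_cv (fun i => a (phi i)) l.
Proof.
  intros Hb.
  destruct (Bolzano_Weierstrass a (fun c => -B <= c <= B) (compact_P3 (-B) B)) as [l Hl].
  { intro n; apply Rabs_le_between, Hb. }
  assert (Hpick : forall iN : nat * nat,
             exists n, (snd iN <= n)%nat /\ Rabs (a n - l) < RinvN (fst iN)).
  { intros [i N]; apply (Hl (disc l (RinvN i)) N).
    exists (RinvN i); intros y Hy; exact Hy. }
  destruct (choice _ Hpick) as [c Hc].
  set (phi := fix phi i := match i with O => c (O, O) | S j => c (S j, S (phi j)) end).
  assert (Hclose : forall i, Rabs (a (phi i) - l) < RinvN i).
  { intros [|i]; [apply (Hc (O, O)) | apply (Hc (S i, S (phi i)))]. }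
  exists phi; split.
  - intro i; destruct (Hc (S i, S (phi i))) as [Hle _]; simpl in Hle |- *; lia.
  - exists l; intros e He; destruct (RinvN_cv He) as [N HN]; exists N.
    intros n Hn; specialize (HN n Hn); specialize (Hclose n); unfold R_dist in *.
    rewrite Rminus_0_r, Rabs_pos_eq in HN by (left; apply cond_pos); lra.
Qed.

Lemma bounded_cv_subseq_coords (K : nat) (x : nat -> nat -> R) B :
  (forall n j, (1 <= j <= K)%nat -> Rabs (x n j) <= B) ->
  exists phi, strictly_increasing phi /\
    forall j, (1 <= j <= K)%nat -> exists l, Un_cv (fun i => x (phi i) j) l.
Proof.
  induction K as [|K IH]; intros Hb.
  - exists (fun i => i); split; [intro; lia | intros; lia].
  - destruct IH as [phi [Hphi Hcv]]; [intros; apply Hb; lia|].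
    destruct (bounded_cv_subseq (fun i => x (phi i) (S K)) B) as [psi [Hpsi [l Hl]]].
    { intros; apply Hb; lia. }
    exists (fun i => phi (psi i)); split; [apply strictly_increasing_comp; assumption|].
    intros j Hj; destruct (Nat.eq_dec j (S K)) as [->|Hne]; [exists l; exact Hl|].
    destruct (Hcv j ltac:(lia)) as [l' Hl'].
    exists l'; exact (Un_cv_subseq (fun i => x (phi i) j) l' psi Hl' Hpsi).
Qed.

(* Coquelicot states its [sum_n_m] lemmas with the [plus] and [zero] of an abstract monoid,
   which [lra] and [ring] do not see through; the [sum_n_m_R_*] lemmas restate them on [R]. *)
Lemma sum_n_m_R_Sm (a : nat -> R) n m :
  (n <= S m)%nat -> sum_n_m a n (S m) = sum_n_m a n m + a (S m).
Proof. intros H; rewrite sum_n_Sm by exact H; reflexivity. Qed.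

Lemma sum_n_m_R_empty (a : nat -> R) n m : (m < n)%nat -> sum_n_m a n m = 0.
Proof. intros H; rewrite sum_n_m_zero by exact H; reflexivity. Qed.

Lemma sum_n_m_R_plus (a b : nat -> R) n m :
  sum_n_m (fun k => a k + b k) n m = sum_n_m a n m + sum_n_m b n m.
Proof. apply (sum_n_m_plus (G := R_AbelianMonoid)). Qed.

Lemma sum_n_m_R_mult_l c (a : nat -> R) n m :
  sum_n_m (fun k => c * a k) n m = c * sum_n_m a n m.
Proof. apply (sum_n_m_mult_l (K := R_Ring)). Qed.

Lemma sum_n_m_R_minus (a b : nat -> R) n m :
  sum_n_m (fun k => a k - b k) n m = sum_n_m a n m - sum_n_m b n m.
Proof.
  unfold Rminus; rewrite sum_n_m_R_plus.
  replace (- sum_n_m b n m) with (-1 * sum_n_m b n m) by ring.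
  rewrite <- sum_n_m_R_mult_l; apply Rplus_eq_compat_l, sum_n_m_ext; intro k; lra.
Qed.

Lemma sum_n_m_R_abs (a : nat -> R) n m :
  Rabs (sum_n_m a n m) <= sum_n_m (fun k => Rabs (a k)) n m.
Proof. apply (norm_sum_n_m (K := R_AbsRing) (V := R_NormedModule)). Qed.

Lemma sum_n_m_R_le_loc (a b : nat -> R) n m :
  (forall k, (n <= k <= m)%nat -> a k <= b k) -> sum_n_m a n m <= sum_n_m b n m.
Proof.
  intros H; destruct (le_lt_dec n m) as [Hnm|Hnm].
  - rewrite !sum_n_m_Reals by exact Hnm; apply sum_Rle; intros; apply H; lia.
  - rewrite !sum_n_m_R_empty by exact Hnm; lra.
Qed.

Lemma sum_n_m_R_nonneg (a : nat -> R) n m :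
  (forall k, (n <= k <= m)%nat -> 0 <= a k) -> 0 <= sum_n_m a n m.
Proof.
  intros H.
  replace 0 with (sum_n_m (fun _ : nat => 0) n m)
    by apply (sum_n_m_const_zero (G := R_AbelianMonoid)).
  apply sum_n_m_R_le_loc, H.
Qed.

Lemma sum_n_m_R_single (a : nat -> R) n m k :
  (n <= k <= m)%nat -> (forall j, (n <= j <= m)%nat -> j <> k -> a j = 0) ->
  sum_n_m a n m = a k.
Proof.
  intros Hk H0.
  assert (Hzero : forall i l, (n <= i)%nat -> (l <= m)%nat -> (l < k \/ k < i)%nat ->
            sum_n_m a i l = 0).
  { intros i l Hi Hl Hil.
    rewrite (sum_n_m_ext_loc a (fun _ => 0)) by (intros j Hj; apply H0; lia).
    apply (sum_n_m_const_zero (G := R_AbelianMonoid)). }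
  assert (Hfrom_k : sum_n_m a k m = a k).
  { rewrite sum_Sn_m by lia; change (a k + sum_n_m a (S k) m = a k).
    rewrite (Hzero (S k) m) by lia; ring. }
  destruct (Nat.eq_dec n k) as [<-|Hnk]; [exact Hfrom_k|].
  rewrite (sum_n_m_Chasles a n (pred k) m) by lia.
  replace (S (pred k)) with k by lia.
  change (sum_n_m a n (pred k) + sum_n_m a k m = a k).
  rewrite Hfrom_k, (Hzero n (pred k)) by lia; ring.
Qed.

Lemma sum_n_m_R_term_le (a : nat -> R) n m k :
  (n <= k <= m)%nat -> (forall j, (n <= j <= m)%nat -> 0 <= a j) ->
  a k <= sum_n_m a n m.
Proof.
  intros Hk Hpos.
  apply Rle_trans with (sum_n_m (fun j => if Nat.eq_dec j k then a j else 0) n m).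
  - rewrite (sum_n_m_R_single _ n m k Hk)
      by (intros j _ Hj; destruct (Nat.eq_dec j k); [lia | reflexivity]).
    destruct (Nat.eq_dec k k); [lra | lia].
  - apply sum_n_m_R_le_loc; intros j Hj.
    destruct (Nat.eq_dec j k); [lra | apply Hpos, Hj].
Qed.

Lemma sum_n_m_Delta (y : nat -> R) j :
  sum_n_m (fun i => Delta y (i - 1)) 1 j = y j - y 0%nat.
Proof.
  induction j as [|j IH]; [rewrite sum_n_m_R_empty by lia; lra|].
  rewrite sum_n_m_R_Sm, IH by lia; unfold Delta; replace (S j - 1)%nat with j by lia; lra.
Qed.

Lemma Un_cv_sum_n_m (a : nat -> nat -> R) (b : nat -> R) n m :
  (forall k, (n <= k <= m)%nat -> Un_cv (fun i => a i k) (b k)) ->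
  Un_cv (fun i => sum_n_m (a i) n m) (sum_n_m b n m).
Proof.
  revert a b; induction m as [|m IH]; intros a b Hcv.
  - destruct n as [|n].
    + rewrite sum_n_n; apply (Un_cv_ext (fun i => a i 0%nat)); [|apply Hcv; lia].
      intro; rewrite sum_n_n; reflexivity.
    + rewrite sum_n_m_R_empty by lia; apply (Un_cv_ext (fun _ => 0)); [|apply Un_cv_const].
      intro; rewrite sum_n_m_R_empty by lia; reflexivity.
  - destruct (le_lt_dec n (S m)) as [Hn|Hn].
    + rewrite sum_n_m_R_Sm by exact Hn.
      apply (Un_cv_ext (fun i => sum_n_m (a i) n m + a i (S m))).
      { intro; symmetry; apply sum_n_m_R_Sm, Hn. }
      apply CV_plus; [apply IH; intros; apply Hcv | apply Hcv]; lia.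
    + rewrite sum_n_m_R_empty by lia; apply (Un_cv_ext (fun _ => 0)); [|apply Un_cv_const].
      intro; rewrite sum_n_m_R_empty by lia; reflexivity.
Qed.

Lemma is_derive_sum_n_m (a : nat -> R -> R) (da : nat -> R) t0 n m :
  (forall k, (n <= k <= m)%nat -> is_derive (a k) t0 (da k)) ->
  is_derive (fun t => sum_n_m (fun k => a k t) n m) t0 (sum_n_m da n m).
Proof.
  revert a da; induction m as [|m IH]; intros a da Hd.
  - destruct n as [|n].
    + rewrite sum_n_n; apply (is_derive_ext (a 0%nat)); [|apply Hd; lia].
      intro; rewrite sum_n_n; reflexivity.
    + rewrite sum_n_m_R_empty by lia.
      apply (is_derive_ext (fun _ => 0));
        [|apply (is_derive_const (K := R_AbsRing) (V := R_NormedModule) 0)].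
      intro; rewrite sum_n_m_R_empty by lia; reflexivity.
  - destruct (le_lt_dec n (S m)) as [Hn|Hn].
    + rewrite sum_n_m_R_Sm by exact Hn.
      apply (is_derive_ext (fun t => sum_n_m (fun k => a k t) n m + a (S m) t)).
      { intro; symmetry; apply sum_n_m_R_Sm, Hn. }
      apply (is_derive_plus (K := R_AbsRing) (V := R_NormedModule));
        [apply IH; intros; apply Hd | apply Hd]; lia.
    + rewrite sum_n_m_R_empty by lia.
      apply (is_derive_ext (fun _ => 0));
        [|apply (is_derive_const (K := R_AbsRing) (V := R_NormedModule) 0)].
      intro; rewrite sum_n_m_R_empty by lia; reflexivity.
Qed.

Lemma is_derive_min_0 (phi : R -> R) D :
  is_derive phi 0 D -> (forall t, phi 0 <= phi t) -> D = 0.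
Proof.
  intros Hd Hmin; apply is_derive_Reals in Hd.
  change D with (derive_pt phi 0 (exist _ D Hd)).
  apply (deriv_minimum phi (-1) 1); [lra | lra | intros; apply Hmin].
Qed.

Lemma fold_right_Rmax_ge (l : list R) x0 v : In v l -> v <= fold_right Rmax x0 l.
Proof.
  induction l as [|a l IH]; simpl; [tauto|]; intros [<-|Hv]; [apply Rmax_l|].
  eapply Rle_trans; [apply IH, Hv | apply Rmax_r].
Qed.

Lemma fold_right_Rmin_le (l : list R) x0 v : In v l -> fold_right Rmin x0 l <= v.
Proof.
  induction l as [|a l IH]; simpl; [tauto|]; intros [<-|Hv]; [apply Rmin_l|].
  eapply Rle_trans; [apply Rmin_r | apply IH, Hv].
Qed.

Lemma maxnorm_ge T w k : (1 <= k <= T)%nat -> Rabs (w k) <= maxnorm T w.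
Proof.
  intros Hk; apply fold_right_Rmax_ge, (in_map (fun k => Rabs (w k))), in_seq; lia.
Qed.

Lemma minp_le T p k : (1 <= k <= S T)%nat -> minp T p <= p k.
Proof. intros Hk; apply fold_right_Rmin_le, in_map, in_seq; lia. Qed.

Lemma Un_cv_of_maxnorm T (un : nat -> nat -> R) ubar :
  is_lim_seq (fun n => maxnorm T (fun k => un n k - ubar k)) 0 ->
  forall k, (1 <= k <= T)%nat -> Un_cv (fun n => un n k) (ubar k).
Proof.
  intros Hlim k Hk; apply is_lim_seq_Reals in Hlim; intros e He.
  destruct (Hlim e He) as [N HN]; exists N; intros n Hn.
  specialize (HN n Hn); unfold R_dist in *; rewrite Rminus_0_r in HN.
  eapply Rle_lt_trans; [apply (maxnorm_ge T (fun k => un n k - ubar k) k Hk)|].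
  eapply Rle_lt_trans; [apply Rle_abs | exact HN].
Qed.

Lemma normE_cv_0 T (x : nat -> nat -> R) xbar :
  (forall j, (j <= S T)%nat -> Un_cv (fun i => x i j) (xbar j)) ->
  is_lim_seq (fun i => normE T (fun k => x i k - xbar k)) 0.
Proof.
  intros Hcv; apply is_lim_seq_Reals; unfold normE; rewrite <- sqrt_0.
  apply continuity_seq; [apply continuity_pt_sqrt; lra|].
  replace 0 with (sum_n_m (fun _ : nat => 0) 1 T)
    by apply (sum_n_m_const_zero (G := R_AbelianMonoid)).
  apply Un_cv_sum_n_m; intros k Hk; unfold Delta; simpl.
  replace 0 with (0 * (0 * 1)) by ring.
  assert (Hd : Un_cv (fun i => x i (S k) - xbar (S k) - (x i k - xbar k)) 0).
  { replace 0 with ((xbar (S k) - xbar (S k)) - (xbar k - xbar k)) by ring.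
    apply CV_minus; apply CV_minus; try apply Un_cv_const; apply Hcv; lia. }
  apply CV_mult; [| apply CV_mult; [| apply Un_cv_const]]; exact Hd.
Qed.

Lemma abs_RInt_le_const_swap (h : R -> R) a b B :
  ex_RInt h a b -> (forall t, Rmin a b <= t <= Rmax a b -> Rabs (h t) <= B) ->
  Rabs (RInt h a b) <= Rabs (b - a) * B.
Proof.
  intros Hex Hb; destruct (Rle_or_lt a b) as [Hab|Hab].
  - rewrite (Rabs_pos_eq (b - a)) by lra; apply abs_RInt_le_const; [lra | exact Hex|].
    intros t Ht; apply Hb; rewrite Rmin_left, Rmax_right; lra.
  - rewrite <- (opp_RInt_swap h b a) by (apply ex_RInt_swap, Hex).
    change (Rabs (- RInt h b a) <= Rabs (b - a) * B).
    rewrite Rabs_Ropp, (Rabs_left (b - a)) by lra; replace (- (b - a)) with (a - b) by ring.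
    apply abs_RInt_le_const; [lra | apply ex_RInt_swap, Hex|].
    intros t Ht; apply Hb; rewrite Rmin_right, Rmax_left; lra.
Qed.

Lemma RInt_nonpos (h : R -> R) a b :
  a <= b -> ex_RInt h a b -> (forall t, a < t < b -> h t <= 0) -> RInt h a b <= 0.
Proof.
  intros Hab Hex Hneg.
  apply Ropp_le_cancel; rewrite Ropp_0.
  change (- RInt h a b) with (opp (RInt h a b)); rewrite <- RInt_opp by exact Hex.
  apply RInt_ge_0; [exact Hab | apply (ex_RInt_opp (V := R_NormedModule)), Hex|].
  intros t Ht; specialize (Hneg t Ht); change (0 <= - h t); lra.
Qed.

Section DiscreteProblem.

Variables (T : nat) (M : R) (f : nat -> R -> R -> R).
Hypothesis f_cont : cont_f T M f.

Lemma cont_f_eps_delta k y u :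
  (1 <= k <= T)%nat -> -M <= u <= M -> forall eps, 0 < eps ->
  exists del, 0 < del /\ forall a b, Rabs (a - y) < del -> Rabs (b - u) < del ->
    -M <= b <= M -> Rabs (f k a b - f k y u) < eps.
Proof.
  intros Hk Hu eps He.
  destruct (f_cont k Hk y u Hu (ball (f k y u) eps)) as [d Hd].
  { exists (mkposreal eps He); intros z Hz; exact Hz. }
  exists d; split; [apply cond_pos|].
  intros a b Ha Hb HbM; apply (Hd (a, b)); [split; assumption | exact HbM].
Qed.

Lemma cont_f_seq k (a b : nat -> R) y u :
  (1 <= k <= T)%nat -> Un_cv a y -> Un_cv b u ->
  (forall n, -M <= b n <= M) -> -M <= u <= M ->
  Un_cv (fun n => f k (a n) (b n)) (f k y u).
Proof.
  intros Hk Ha Hb HbM Hu e He.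
  destruct (cont_f_eps_delta k y u Hk Hu e He) as [d [Hd Hclose]].
  destruct (Ha d Hd) as [N1 H1]; destruct (Hb d Hd) as [N2 H2].
  exists (max N1 N2); intros n Hn; apply Hclose;
    [apply H1; lia | apply H2; lia | apply HbM].
Qed.

Lemma cont_f_section k u :
  (1 <= k <= T)%nat -> -M <= u <= M -> forall t, continuous (fun s => f k s u) t.
Proof.
  intros Hk Hu t P [e He].
  destruct (cont_f_eps_delta k t u Hk Hu e (cond_pos e)) as [d [Hd Hclose]].
  exists (mkposreal d Hd); intros s Hs; apply He, Hclose; [exact Hs | | exact Hu].
  rewrite Rminus_eq_0, Rabs_R0; exact Hd.
Qed.

Lemma ex_RInt_f_section k u :
  (1 <= k <= T)%nat -> -M <= u <= M -> forall a b, ex_RInt (fun s => f k s u) a b.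
Proof.
  intros Hk Hu a b; apply (ex_RInt_continuous (V := R_CompleteNormedModule)).
  intros; apply cont_f_section; assumption.
Qed.

Lemma f_bounded k A :
  (1 <= k <= T)%nat ->
  exists B, forall t u, Rabs t <= A -> -M <= u <= M -> Rabs (f k t u) <= B.
Proof.
  intros Hk; apply NNPP; intros Hunb.
  assert (Hz : forall n : nat, exists z : R * R,
             Rabs (fst z) <= A /\ -M <= snd z <= M /\ INR n < Rabs (f k (fst z) (snd z))).
  { intro n; apply NNPP; intros Hn; apply Hunb; exists (INR n).
    intros t u Ht Hu; apply Rnot_lt_le; intros Hlt; apply Hn; exists (t, u); simpl; auto. }
  destruct (choice _ Hz) as [z Hz'].
  destruct (bounded_cv_subseq (fun n => fst (z n)) A) as [phi [Hphi [t Ht]]].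
  { intro n; apply Hz'. }
  destruct (bounded_cv_subseq (fun i => snd (z (phi i))) M) as [psi [Hpsi [u Hu]]].
  { intro i; apply Rabs_le, Hz'. }
  set (idx := fun i => phi (psi i)).
  assert (Hidx : strictly_increasing idx)
    by exact (strictly_increasing_comp phi psi Hphi Hpsi).
  assert (HuM : -M <= u <= M).
  { split; eapply Rle_cv_lim;
      [| apply Un_cv_const | exact Hu | | exact Hu | apply Un_cv_const];
      intro i; apply Hz'. }
  assert (Hf : Un_cv (fun i => f k (fst (z (idx i))) (snd (z (idx i)))) (f k t u)).
  { apply cont_f_seq; [exact Hk | | exact Hu | intro; apply Hz' | exact HuM].
    exact (Un_cv_subseq _ _ _ Ht Hpsi). }
  destruct (maj_by_pos _ (exist _ _ Hf)) as [B [_ HB]].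
  destruct (INR_unbounded B) as [n Hn].
  destruct (Hz' (idx n)) as [_ [_ Hbig]].
  pose proof (le_INR _ _ (strictly_increasing_ge idx Hidx n)); specialize (HB n); lra.
Qed.

Lemma Fint_bounded_above k alpha :
  (1 <= k <= T)%nat -> 0 < alpha ->
  (forall y u, alpha <= Rabs y -> Rabs u <= M -> y * f k y u <= 0) ->
  exists C, forall y u, -M <= u <= M -> Fint f k y u <= C.
Proof.
  intros Hk Ha Hsign; destruct (f_bounded k alpha Hk) as [B HB].
  exists (alpha * Rabs B); intros y u Hu; unfold Fint; set (h := fun s => f k s u).
  assert (Hex : forall a b, ex_RInt h a b) by (apply ex_RInt_f_section; assumption).
  assert (HuM : Rabs u <= M) by (apply Rabs_le, Hu).
  assert (Hnear : forall z, Rabs z <= alpha -> RInt h 0 z <= alpha * Rabs B).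
  { intros z Hz; eapply Rle_trans; [apply Rle_abs|].
    eapply Rle_trans; [apply (abs_RInt_le_const_swap h 0 z (Rabs B)); [apply Hex|]|].
    - intros t Ht; eapply Rle_trans; [apply HB; [|exact Hu] | apply Rle_abs].
      apply Rabs_le_between in Hz; apply Rabs_le.
      unfold Rmin, Rmax in Ht; destruct (Rle_dec 0 z); lra.
    - rewrite Rminus_0_r; apply Rmult_le_compat_r; [apply Rabs_pos | exact Hz]. }
  destruct (Rle_or_lt (Rabs y) alpha) as [Hy|Hy]; [apply Hnear, Hy|].
  (* beyond [alpha] the sign condition makes [F] decrease away from the origin *)
  destruct (Rle_or_lt 0 y) as [Hy0|Hy0].
  - rewrite Rabs_pos_eq in Hy by lra.
    rewrite <- (RInt_Chasles h 0 alpha y) by apply Hex.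
    assert (Htail : RInt h alpha y <= 0).
    { apply RInt_nonpos; [lra | apply Hex|]; intros t Ht.
      pose proof (Hsign t u ltac:(rewrite Rabs_pos_eq; lra) HuM); unfold h; nra. }
    pose proof (Hnear alpha ltac:(rewrite Rabs_pos_eq; lra)).
    change (RInt h 0 alpha + RInt h alpha y <= alpha * Rabs B); lra.
  - rewrite Rabs_left in Hy by lra.
    rewrite <- (RInt_Chasles h 0 (- alpha) y) by apply Hex.
    rewrite <- (opp_RInt_swap h y (- alpha)) by apply Hex.
    assert (Htail : 0 <= RInt h y (- alpha)).
    { apply RInt_ge_0; [lra | apply Hex|]; intros t Ht.
      pose proof (Hsign t u ltac:(rewrite Rabs_left; lra) HuM); unfold h; nra. }
    pose proof (Hnear (- alpha) ltac:(rewrite Rabs_Ropp, Rabs_pos_eq; lra)).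
    change (RInt h 0 (- alpha) + - RInt h y (- alpha) <= alpha * Rabs B); lra.
Qed.

(* Rescaling puts all the integrals [F(k, y_n, u_n)] on the fixed interval [[0, 1]]. *)
Lemma Fint_rescale k u y :
  (1 <= k <= T)%nat -> -M <= u <= M ->
  Fint f k y u = RInt (fun s => y * f k (y * s) u) 0 1.
Proof.
  intros Hk Hu; unfold Fint.
  replace (RInt (fun s => f k s u) 0 y)
    with (RInt (fun s => f k s u) (y * 0 + 0) (y * 1 + 0)) by (f_equal; ring).
  rewrite <- RInt_comp_lin by (apply ex_RInt_f_section; assumption).
  apply RInt_ext; intros s _; rewrite Rplus_0_r; reflexivity.
Qed.

Lemma ex_RInt_rescaled k u y :
  (1 <= k <= T)%nat -> -M <= u <= M -> ex_RInt (fun s => y * f k (y * s) u) 0 1.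
Proof.
  intros Hk Hu.
  apply (ex_RInt_ext (fun s => scal y (f k (y * s + 0) u))).
  { intros s _; rewrite Rplus_0_r; reflexivity. }
  apply (ex_RInt_comp_lin (fun s => f k s u)), ex_RInt_f_section; assumption.
Qed.

Lemma rescaled_unif_cv k (yn un : nat -> R) y u :
  (1 <= k <= T)%nat -> Un_cv yn y -> Un_cv un u ->
  (forall n, -M <= un n <= M) -> -M <= u <= M ->
  forall eps, 0 < eps -> exists N, forall n, (N <= n)%nat -> forall s, 0 <= s <= 1 ->
    Rabs (yn n * f k (yn n * s) (un n) - y * f k (y * s) u) <= eps.
Proof.
  intros Hk Hy Hu HunM HuM eps He; apply NNPP; intros Hnot.
  (* otherwise pick witnesses [(n, s)] of non-uniformity beyond every rank; a
     subsequence of the [s] converges, contradicting pointwise convergence there *)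
  assert (Hbad : forall N : nat, exists w : nat * R, (N <= fst w)%nat /\ 0 <= snd w <= 1 /\
            eps < Rabs (yn (fst w) * f k (yn (fst w) * snd w) (un (fst w))
                        - y * f k (y * snd w) u)).
  { intro N; apply NNPP; intros HN; apply Hnot; exists N; intros n Hn s Hs.
    apply Rnot_lt_le; intros Hlt; apply HN; exists (n, s); simpl; auto. }
  destruct (choice _ Hbad) as [w Hw].
  destruct (bounded_cv_subseq (fun N => snd (w N)) 1) as [psi [Hpsi [s Hs]]].
  { intro N; apply Rabs_le; destruct (Hw N) as [_ [H _]]; lra. }
  set (m := fun i => fst (w (psi i))); set (s_ := fun i => snd (w (psi i))).
  assert (Hm : forall i, (i <= m i)%nat).
  { intro i; pose proof (strictly_increasing_ge psi Hpsi i); pose proof (proj1 (Hw (psi i))).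
    unfold m; lia. }
  pose proof (Un_cv_reindex yn y m Hy Hm) as Hym.
  assert (Hlhs : Un_cv (fun i => yn (m i) * f k (yn (m i) * s_ i) (un (m i)))
                       (y * f k (y * s) u)).
  { apply CV_mult; [exact Hym|].
    apply cont_f_seq; [exact Hk | apply CV_mult; assumption | | intro; apply HunM | exact HuM].
    apply (Un_cv_reindex un u m Hu Hm). }
  assert (Hrhs : Un_cv (fun i => y * f k (y * s_ i) u) (y * f k (y * s) u)).
  { apply CV_mult; [apply Un_cv_const|].
    apply cont_f_seq; [exact Hk | apply CV_mult; [apply Un_cv_const | exact Hs]
                      | apply Un_cv_const | intro; exact HuM | exact HuM]. }
  destruct (CV_minus _ _ _ _ Hlhs Hrhs eps He) as [N HN].
  specialize (HN N (le_n N)); unfold R_dist in HN; rewrite Rminus_eq_0, Rminus_0_r in HN.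
  destruct (Hw (psi N)) as [_ [_ Hfar]]; unfold m, s_ in HN; lra.
Qed.

Lemma Fint_seq_cont k (yn un : nat -> R) y u :
  (1 <= k <= T)%nat -> Un_cv yn y -> Un_cv un u ->
  (forall n, -M <= un n <= M) -> -M <= u <= M ->
  Un_cv (fun n => Fint f k (yn n) (un n)) (Fint f k y u).
Proof.
  intros Hk Hy Hu HunM HuM e He.
  destruct (rescaled_unif_cv k yn un y u Hk Hy Hu HunM HuM (e / 2)) as [N HN]; [lra|].
  exists N; intros n Hn; unfold R_dist.
  rewrite (Fint_rescale k (un n)), (Fint_rescale k u) by auto.
  change (RInt (fun s => yn n * f k (yn n * s) (un n)) 0 1
          - RInt (fun s => y * f k (y * s) u) 0 1)
    with (minus (RInt (fun s => yn n * f k (yn n * s) (un n)) 0 1)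
                (RInt (fun s => y * f k (y * s) u) 0 1)).
  rewrite <- RInt_minus by (apply ex_RInt_rescaled; auto).
  eapply Rle_lt_trans; [apply abs_RInt_le_const; [lra | |]|].
  - apply (ex_RInt_minus (V := R_NormedModule)); apply ex_RInt_rescaled; auto.
  - intros s Hs; apply (HN n Hn s Hs).
  - lra.
Qed.

Variables (p g : nat -> R).

Lemma abs_le_sum_abs_Delta (y : nat -> R) j :
  inE T y -> (1 <= j <= T)%nat ->
  Rabs (y j) <= sum_n_m (fun i => Rabs (Delta y (i - 1))) 1 (S T).
Proof.
  intros [Hy0 _] Hj.
  replace (y j) with (y j - y 0%nat) by (rewrite Hy0; ring).
  rewrite <- sum_n_m_Delta; eapply Rle_trans; [apply sum_n_m_R_abs|].
  rewrite (sum_n_m_Chasles _ 1 j (S T)) by lia.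
  pose proof (sum_n_m_R_nonneg (fun i => Rabs (Delta y (i - 1))) (S j) (S T)
                (fun i _ => Rabs_pos _)).
  change (sum_n_m (fun i => Rabs (Delta y (i - 1))) 1 j
          <= sum_n_m (fun i => Rabs (Delta y (i - 1))) 1 j
             + sum_n_m (fun i => Rabs (Delta y (i - 1))) (S j) (S T)); lra.
Qed.

Lemma J_zero u : J T p f g u (fun _ => 0) = 0.
Proof.
  unfold J, Fint.
  rewrite (sum_n_m_ext _ (fun _ => 0) 1 (S T)) by (intro; unfold Delta; simpl; ring).
  rewrite (sum_n_m_ext _ (fun _ => 0) 1 T)
    by (intro; apply (RInt_point (V := R_CompleteNormedModule))).
  rewrite (sum_n_m_ext (fun k => g k * 0) (fun _ => 0) 1 T) by (intro; lra).
  rewrite (sum_n_m_const_zero (G := R_AbelianMonoid)); unfold zero; simpl; lra.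
Qed.

Lemma J_seq_cont (ui yi : nat -> nat -> R) ubar y :
  (forall i, inLM T M (ui i)) -> inLM T M ubar ->
  (forall k, (1 <= k <= T)%nat -> Un_cv (fun i => ui i k) (ubar k)) ->
  (forall j, (j <= S T)%nat -> Un_cv (fun i => yi i j) (y j)) ->
  Un_cv (fun i => J T p f g (ui i) (yi i)) (J T p f g ubar y).
Proof.
  intros Hui Hubar Hu Hy; unfold J.
  apply CV_plus; [apply CV_minus|]; apply Un_cv_sum_n_m; intros k Hk.
  - unfold Delta; simpl; apply CV_mult; [apply Un_cv_const|].
    apply CV_mult; [| apply CV_mult; [| apply Un_cv_const]];
      apply CV_minus; apply Hy; lia.
  - apply Fint_seq_cont; [exact Hk | apply Hy; lia | apply Hu, Hk | |];
      [intro i | ]; apply Rabs_le_between; [apply Hui | apply Hubar]; exact Hk.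
  - apply CV_mult; [apply Un_cv_const | apply Hy; lia].
Qed.

Definition dJ (u x h : nat -> R) : R :=
  sum_n_m (fun k => p k * Delta x (k - 1) * Delta h (k - 1)) 1 (S T)
  - sum_n_m (fun k => f k (x k) (u k) * h k) 1 T
  + sum_n_m (fun k => g k * h k) 1 T.

Lemma is_derive_Fint_dir k u a b :
  (1 <= k <= T)%nat -> -M <= u <= M ->
  is_derive (fun t => Fint f k (a + t * b) u) 0 (f k a u * b).
Proof.
  intros Hk Hu; unfold Fint.
  replace (f k a u * b) with (scal b (f k (a + 0 * b) u))
    by (rewrite Rmult_0_l, Rplus_0_r; apply Rmult_comm).
  apply (is_derive_comp (fun y => RInt (fun s => f k s u) 0 y) (fun t => a + t * b)).
  - apply (is_derive_RInt (V := R_NormedModule) (fun s => f k s u) _ 0);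
      [|apply cont_f_section; assumption].
    exists (mkposreal 1 Rlt_0_1); intros y _.
    apply (RInt_correct (V := R_CompleteNormedModule)), ex_RInt_f_section; assumption.
  - auto_derive; [exact I | ring].
Qed.

Lemma is_derive_J_dir u x h :
  inLM T M u -> is_derive (fun t => J T p f g u (fun k => x k + t * h k)) 0 (dJ u x h).
Proof.
  intros Hu; unfold J, dJ.
  apply (is_derive_plus (K := R_AbsRing) (V := R_NormedModule));
    [apply (is_derive_minus (K := R_AbsRing) (V := R_NormedModule))|];
    apply is_derive_sum_n_m; intros k Hk.
  - unfold Delta; auto_derive; [exact I | field].
  - apply is_derive_Fint_dir; [exact Hk | apply Rabs_le_between, Hu, Hk].
  - auto_derive; [exact I | ring].
Qed.

Definition unit_vec (k : nat) : nat -> R := fun j => if Nat.eq_dec j k then 1 else 0.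

Lemma dJ_unit_vec u x k :
  (1 <= k <= T)%nat ->
  dJ u x (unit_vec k)
  = g k - f k (x k) (u k) - Delta (fun j => p j * Delta x (j - 1)) k.
Proof.
  intros Hk; unfold dJ.
  assert (Hsingle : forall (a : nat -> R) i n m, (n <= i <= m)%nat ->
            sum_n_m (fun j => a j * unit_vec i j) n m = a i).
  { intros a i n m Hi; rewrite (sum_n_m_R_single _ n m i Hi);
      unfold unit_vec; [destruct (Nat.eq_dec i i); [lra | lia]|].
    intros j _ Hj; destruct (Nat.eq_dec j i); [lia | lra]. }
  rewrite (sum_n_m_ext_loc _ (fun j => p j * Delta x (j - 1) * unit_vec k j
                                      - p j * Delta x (j - 1) * unit_vec k (j - 1)%nat))
    by (intros j Hj; unfold Delta; replace (S (j - 1)) with j by lia; simpl; ring).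
  rewrite sum_n_m_R_minus, !Hsingle by lia.
  rewrite (sum_n_m_R_single _ 1 (S T) (S k)) by
    (lia || (intros j Hj Hjk; unfold unit_vec; destruct (Nat.eq_dec (j - 1) k); [lia | ring])).
  unfold unit_vec, Delta; replace (S k - 1)%nat with k by lia.
  destruct (Nat.eq_dec k k); [|lia]; replace (S (k - 1)) with k by lia; ring.
Qed.

Lemma minimizer_in_V u x :
  inLM T M u -> inE T x -> (forall v, inE T v -> J T p f g u x <= J T p f g u v) ->
  V T p f g u x.
Proof.
  intros Hu Hx Hmin; split; [exact Hx|]; split; [exact Hmin|]; intros h Hh.
  assert (HdJ : dJ u x h = 0).
  { apply (is_derive_min_0 (fun t => J T p f g u (fun k => x k + t * h k)));
      [apply is_derive_J_dir, Hu|]; intro t.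
    replace (fun k => x k + 0 * h k) with x
      by (apply functional_extensionality; intro; ring).
    apply Hmin; destruct Hx as [Hx0 HxT], Hh as [Hh0 HhT]; split;
      [rewrite Hx0, Hh0 | rewrite HxT, HhT]; ring. }
  pose proof (is_derive_J_dir u x h Hu) as Hd; rewrite HdJ in Hd; exact Hd.
Qed.

Lemma V_euler_lagrange u x :
  inLM T M u -> V T p f g u x ->
  forall k, (1 <= k <= T)%nat ->
    Delta (fun j => p j * Delta x (j - 1)) k + f k (x k) (u k) = g k.
Proof.
  intros Hu [_ [_ Hcrit]] k Hk.
  assert (Hunit : inE T (unit_vec k)).
  { unfold unit_vec; split; destruct Nat.eq_dec; [lia | reflexivity | lia | reflexivity]. }
  assert (HdJ : dJ u x (unit_vec k) = 0).
  { rewrite <- (is_derive_unique _ _ _ (Hcrit _ Hunit)).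
    symmetry; apply is_derive_unique, is_derive_J_dir, Hu. }
  rewrite dJ_unit_vec in HdJ by exact Hk; lra.
Qed.

Section Coercivity.

Variable alpha : R.
Hypothesis alpha_pos : 0 < alpha.
Hypothesis f_sign : forall k y u, (1 <= k <= T)%nat -> alpha <= Rabs y -> Rabs u <= M ->
  y * f k y u <= 0.
Hypothesis minp_pos : 0 < minp T p.

Lemma J_lower_bound :
  exists K, forall u y, inLM T M u -> inE T y ->
    sum_n_m (fun i => minp T p / 4 * Delta y (i - 1) ^ 2) 1 (S T) - K <= J T p f g u y.
Proof.
  destruct (choice (fun k C => (1 <= k <= T)%nat ->
                      forall y u, -M <= u <= M -> Fint f k y u <= C)) as [C HC].
  { intro k; destruct (classic (1 <= k <= T)%nat) as [Hk|Hk]; [|exists 0; tauto].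
    destruct (Fint_bounded_above k alpha Hk alpha_pos (fun y u => f_sign k y u Hk)) as [C HC].
    exists C; intros _; exact HC. }
  set (m := minp T p) in *; set (G := sum_n_m (fun k => Rabs (g k)) 1 T).
  (* [|sum g y| <= G sum |Delta y|], and termwise [p d^2 / 2 - G |d| >= m d^2 / 4 - G^2 / m] *)
  exists (INR (S T) * (G ^ 2 / m) + sum_n_m C 1 T); intros u y Hu Hy.
  assert (Hquad : sum_n_m (fun i => m / 4 * Delta y (i - 1) ^ 2 - G ^ 2 / m) 1 (S T)
            <= sum_n_m (fun i => p i / 2 * Delta y (i - 1) ^ 2
                                 - G * Rabs (Delta y (i - 1))) 1 (S T)).
  { apply sum_n_m_R_le_loc; intros i Hi; pose proof (minp_le T p i Hi) as Hpi.
    rewrite <- pow2_abs; set (d := Rabs (Delta y (i - 1))).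
    assert (Hsq : m / 2 * d ^ 2 - G * d - (m / 4 * d ^ 2 - G ^ 2 / m)
                  = (m * d / 2 - G) ^ 2 / m) by (field; lra).
    assert (0 <= (m * d / 2 - G) ^ 2 / m)
      by (apply Rmult_le_pos; [apply pow2_ge_0 | left; apply Rinv_0_lt_compat; lra]).
    pose proof (pow2_ge_0 d); fold m in Hpi; nra. }
  rewrite !sum_n_m_R_minus, sum_n_m_const, (sum_n_m_R_mult_l G) in Hquad.
  replace (S (S T) - 1)%nat with (S T) in Hquad by lia.
  assert (HF : sum_n_m (fun k => Fint f k (y k) (u k)) 1 T <= sum_n_m C 1 T).
  { apply sum_n_m_R_le_loc; intros k Hk; apply HC; [exact Hk | apply Rabs_le_between, Hu, Hk]. }
  assert (Hg : Rabs (sum_n_m (fun k => g k * y k) 1 T)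
               <= G * sum_n_m (fun i => Rabs (Delta y (i - 1))) 1 (S T)).
  { eapply Rle_trans; [apply sum_n_m_R_abs|].
    apply Rle_trans with
      (sum_n_m (fun k => sum_n_m (fun i => Rabs (Delta y (i - 1))) 1 (S T) * Rabs (g k)) 1 T).
    - apply sum_n_m_R_le_loc; intros k Hk; rewrite Rabs_mult, Rmult_comm.
      apply Rmult_le_compat_r; [apply Rabs_pos | apply abs_le_sum_abs_Delta; assumption].
    - rewrite sum_n_m_R_mult_l; unfold G; right; ring. }
  apply Rabs_le_between in Hg; unfold J; lra.
Qed.

Lemma J_bounded_below : exists c, forall u y, inLM T M u -> inE T y -> c <= J T p f g u y.
Proof.
  destruct J_lower_bound as [K HK]; exists (- K); intros u y Hu Hy.
  pose proof (HK u y Hu Hy).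
  assert (Hm4 : 0 <= minp T p / 4) by lra.
  pose proof (sum_n_m_R_nonneg (fun i => minp T p / 4 * Delta y (i - 1) ^ 2) 1 (S T)
                (fun i _ => Rmult_le_pos _ _ Hm4 (pow2_ge_0 _))).
  lra.
Qed.

Lemma J_sublevel_bounded L :
  exists B, forall u y, inLM T M u -> inE T y -> J T p f g u y <= L ->
    forall j, (1 <= j <= T)%nat -> Rabs (y j) <= B.
Proof.
  destruct J_lower_bound as [K HK]; set (m := minp T p) in *.
  set (Q := 4 * (L + K) / m).
  exists (INR (S T) * (Q + 1)); intros u y Hu Hy HL j Hj.
  assert (Hd : forall i, (1 <= i <= S T)%nat -> Rabs (Delta y (i - 1)) <= Q + 1).
  { intros i Hi; assert (Hm4 : 0 <= m / 4) by lra.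
    pose proof (sum_n_m_R_term_le (fun i => m / 4 * Delta y (i - 1) ^ 2) 1 (S T) i Hi
                  (fun i _ => Rmult_le_pos _ _ Hm4 (pow2_ge_0 _))) as Hterm.
    cbv beta in Hterm; pose proof (HK u y Hu Hy).
    assert (Hsq : Rabs (Delta y (i - 1)) ^ 2 <= Q).
    { rewrite pow2_abs; unfold Q; apply (Rmult_le_reg_l (m / 4)); [lra|].
      replace (m / 4 * (4 * (L + K) / m)) with (L + K) by (field; lra); lra. }
    pose proof (Rabs_pos (Delta y (i - 1))).
    pose proof (pow2_ge_0 (Rabs (Delta y (i - 1)) - 1)); nra. }
  eapply Rle_trans; [apply abs_le_sum_abs_Delta; assumption|].
  replace (INR (S T) * (Q + 1)) with (sum_n_m (fun _ => Q + 1) 1 (S T))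
    by (rewrite sum_n_m_const; do 2 f_equal; lia).
  apply sum_n_m_R_le_loc, Hd.
Qed.

Lemma minimizing_subseq_cv (un xn : nat -> nat -> R) ubar (eps : nat -> R) :
  (forall n, inLM T M (un n)) -> inLM T M ubar ->
  (forall k, (1 <= k <= T)%nat -> Un_cv (fun n => un n k) (ubar k)) ->
  (forall n, inE T (xn n)) -> (forall n, eps n <= 1) -> Un_cv eps 0 ->
  (forall n v, inE T v -> J T p f g (un n) (xn n) <= J T p f g (un n) v + eps n) ->
  exists phi xbar, strictly_increasing phi /\ inE T xbar /\
    (forall j, (j <= S T)%nat -> Un_cv (fun i => xn (phi i) j) (xbar j)) /\
    (forall v, inE T v -> J T p f g ubar xbar <= J T p f g ubar v).
Proof.
  intros Hun Hubar Hcv Hxn Heps1 Heps Hmin.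
  destruct (J_sublevel_bounded 1) as [B HB].
  assert (Hbd : forall n j, (1 <= j <= T)%nat -> Rabs (xn n j) <= B).
  { intros n j Hj; apply (HB (un n)); [apply Hun | apply Hxn | | exact Hj].
    pose proof (Hmin n (fun _ => 0) (conj eq_refl eq_refl)) as H0.
    rewrite J_zero in H0; specialize (Heps1 n); lra. }
  destruct (bounded_cv_subseq_coords T xn B Hbd) as [phi [Hphi Hlim]].
  destruct (choice (fun j l => (1 <= j <= T)%nat -> Un_cv (fun i => xn (phi i) j) l))
    as [L HL].
  { intro j; destruct (classic (1 <= j <= T)%nat) as [Hj|Hj]; [|exists 0; tauto].
    destruct (Hlim j Hj) as [l Hl]; exists l; auto. }
  (* [xn n 0 = xn n (S T) = 0], so [xbar] is set to [0] outside [1..T] *)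
  set (xbar := fun j => if le_dec 1 j then if le_dec j T then L j else 0 else 0).
  assert (Hxbar : forall j, (j <= S T)%nat -> Un_cv (fun i => xn (phi i) j) (xbar j)).
  { intros j Hj; unfold xbar.
    destruct (le_dec 1 j); [destruct (le_dec j T); [apply HL; lia|]|];
      apply (Un_cv_ext (fun _ => 0)); try apply Un_cv_const; intro i;
      destruct (Hxn (phi i)) as [H0 HT]; [replace j with (S T) | replace j with 0%nat];
      auto; lia. }
  assert (HxbarE : inE T xbar).
  { unfold xbar; split; destruct (le_dec 1 _); try destruct (le_dec _ T);
      reflexivity || lia. }
  exists phi, xbar; split; [exact Hphi|]; split; [exact HxbarE|]; split; [exact Hxbar|].
  intros v Hv.
  assert (Hu : forall k, (1 <= k <= T)%nat -> Un_cv (fun i => un (phi i) k) (ubar k))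
    by (intros k Hk; apply (Un_cv_subseq (fun n => un n k)); auto).
  eapply Rle_cv_lim; [intro i; apply (Hmin (phi i) v Hv) | apply J_seq_cont; auto |].
  rewrite <- (Rplus_0_r (J T p f g ubar v)); apply CV_plus;
    [apply J_seq_cont; auto; intros; apply Un_cv_const | apply Un_cv_subseq; assumption].
Qed.

Lemma exists_minimizer u :
  inLM T M u -> exists x, inE T x /\ forall v, inE T v -> J T p f g u x <= J T p f g u v.
Proof.
  intros Hu; destruct J_bounded_below as [c Hc].
  destruct (completeness (fun r => exists v, inE T v /\ r = - J T p f g u v))
    as [s [Hub Hleast]].
  { exists (- c); intros r [v [Hv ->]]; specialize (Hc u v Hu Hv); lra. }
  { exists (- J T p f g u (fun _ => 0)), (fun _ => 0); split; [split|]; reflexivity. }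
  (* [- s] is the infimum of [J_u] *)
  assert (Happrox : forall n : nat, exists v, inE T v /\ J T p f g u v <= - s + RinvN n).
  { intro n; apply NNPP; intros Hn.
    assert (s <= s - RinvN n); [|pose proof (cond_pos (RinvN n)); lra].
    apply Hleast; intros r [v [Hv ->]]; apply Rnot_lt_le; intros Hr.
    apply Hn; exists v; split; [exact Hv | lra]. }
  destruct (choice _ Happrox) as [vn Hvn].
  destruct (minimizing_subseq_cv (fun _ => u) vn u (fun n => RinvN n))
    as [phi [x [_ [Hx [_ Hmin]]]]];
    [intro; exact Hu | exact Hu | intros; apply Un_cv_const | intro n; apply Hvn | |
     exact RinvN_cv | |].
  - intro n; simpl; rewrite <- Rinv_1.
    apply Rinv_le_contravar; [lra | pose proof (pos_INR n); lra].
  - intros n v Hv; destruct (Hvn n) as [_ Hle].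
    pose proof (Hub _ (ex_intro _ v (conj Hv eq_refl))); lra.
  - exists x; split; assumption.
Qed.

End Coercivity.

End DiscreteProblem.

Theorem theorem1 :
  forall (T : nat) (M : R) (f : nat -> R -> R -> R) (p g : nat -> R),
    (1 <= T)%nat -> 0 < M ->
    cont_f T M f ->
    (exists alpha, 0 < alpha /\
       forall k y u, (1 <= k <= T)%nat -> alpha <= Rabs y -> Rabs u <= M ->
         y * f k y u <= 0) ->
    0 < minp T p ->
    (forall u, inLM T M u -> exists x, V T p f g u x)
    /\
    (forall (un : nat -> nat -> R) (ubar : nat -> R) (xn : nat -> nat -> R),
       (forall n, inLM T M (un n)) -> inLM T M ubar ->
       is_lim_seq (fun n => maxnorm T (fun k => un n k - ubar k)) 0 ->
       (forall n, V T p f g (un n) (xn n)) ->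
       exists (phi : nat -> nat) (xbar : nat -> R),
         (forall i, (phi i < phi (S i))%nat)
         /\ inE T xbar
         /\ is_lim_seq (fun i => normE T (fun k => xn (phi i) k - xbar k)) 0
         /\ (forall v, inE T v -> J T p f g ubar xbar <= J T p f g ubar v)
         /\ V T p f g ubar xbar
         /\ (forall k, (1 <= k <= T)%nat ->
               Delta (fun j => p j * Delta xbar (j - 1)) k
               + f k (xbar k) (ubar k) = g k)).
Proof.
  intros T M f p g _ _ Hcont [alpha [Halpha Hsign]] Hminp; split.
  - intros u Hu.
    destruct (exists_minimizer T M f Hcont p g alpha Halpha Hsign Hminp u Hu) as [x [Hx Hmin]].
    exists x; apply (minimizer_in_V T M f Hcont); assumption.
  - intros un ubar xn Hun Hubar Hlim HV.
    destruct (minimizing_subseq_cv T M f Hcont p g alpha Halpha Hsign Hminp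
                un xn ubar (fun _ => 0)) as [phi [xbar [Hphi [Hxbar [Hcv Hmin]]]]].
    + exact Hun.
    + exact Hubar.
    + apply Un_cv_of_maxnorm, Hlim.
    + intro n; apply HV.
    + intro; lra.
    + apply Un_cv_const.
    + intros n v Hv; rewrite Rplus_0_r; apply HV, Hv.
    + assert (HVbar : V T p f g ubar xbar) by (apply (minimizer_in_V T M f Hcont); assumption).
      exists phi, xbar; split; [exact Hphi|]; split; [exact Hxbar|].
      split; [apply normE_cv_0, Hcv|]; split; [exact Hmin|]; split; [exact HVbar|].
      exact (V_euler_lagrange T M f Hcont p g ubar xbar Hubar HVbar).
Qed.
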